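(* Let $K$ be a finite commutative ring, $G$ a group, $\alpha:G\times G\to U(K)$ a 2-cocycle, and $R=K^\alpha G$ the twisted group ring. Let $T_1,T_2\subseteq R$ be subsets such that any two elements of $T_1$ commute, and let $(-)^*:T_2\to R$ be a map satisfying $x\,y^*=y\,x^*$ for all $x,y\in T_2$. Let $L^1_1,\dots,L^1_{n_1}\in T_1$, $L^2_1,\dots,L^2_{n_2}\in T_2$, $h\in R$, $a,c\in T_1$ and $b,d\in T_2$. Suppose that integers $z_{ij}$ ($1\le i\le n_1$, $1\le j\le n_2$) satisfy \[ ahb=\sum_{i=1}^{n_1}\sum_{j=1}^{n_2} z_{ij}\,L^1_i\,h\,L^2_j. \] Then \[ \sum_{i=1}^{n_1}\sum_{j=1}^{n_2} z_{ij}\,L^1_i\,(chd)\,(L^2_j)^* \;=\; c\,a\,h\,b\,d^*. \]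
   Context: $U(K)$ is the group of units of $K$. A 2-cocycle is a map $\alpha:G\times G\to U(K)$ with $\alpha(g,1)=\alpha(1,g)=1$ and $\alpha(g,h)\alpha(gh,k)=\alpha(g,hk)\alpha(h,k)$ for all $g,h,k\in G$. The twisted group ring $K^\alpha G$ is the free $K$-module with basis $\{\overline g:g\in G\}$ and multiplication $(a\overline g)(b\overline h)=ab\,\alpha(g,h)\,\overline{gh}$ extended bilinearly. Integer coefficients $z_{ij}$ act by repeated addition (e.g. coefficients in the prime field $\mathbb{Z}_p$ when $R$ has characteristic $p$). This is used in the key exchange where Alice publishes $ahb$, Bob publishes $chd$, and the shared key is $a(chd)b^*=c(ahb)d^*$. *)

From HB Require Import structures.
From mathcomp Require Import all_boot all_order all_algebra.
From mathcomp Require Import monoid.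
From mathcomp Require Import finmap.
From mathcomp.multinomials Require Import monalg.

Set Implicit Arguments.
Unset Strict Implicit.
Unset Printing Implicit Defensive.

Import GRing.Theory.
Local Open Scope ring_scope.

Definition is_2cocycle (K : comNzRingType) (G : groupType)
    (alpha : G -> G -> K) : Prop :=
  [/\ forall g h, exists u : K, alpha g h * u = 1,
      forall g, alpha g 1%g = 1,
      forall g, alpha 1%g g = 1 &
      forall g h k, alpha g h * alpha (g * h)%g k = alpha g (h * k)%g * alpha h k].

(* Multiplication of the twisted group ring K^alpha G on the free K-module
   {malg K[G]} with basis G (the basis element gbar is << g >>):
   (a gbar)(b hbar) = a b alpha(g,h) (gh)bar, extended bilinearly. *)
Definition twisted_mul (K : comNzRingType) (G : groupType)
    (alpha : G -> G -> K) (x y : {malg K[G]}) : {malg K[G]} :=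
  \sum_(g <- msupp x) \sum_(h <- msupp y)
     << (x@_g * y@_h * alpha g h) *g (g * h)%g >>.

Notation "x *[ alpha ] y" := (twisted_mul alpha x y)
  (at level 40, left associativity, format "x  *[ alpha ]  y") : ring_scope.

(* The twisted product is biadditive, and the cocycle identity makes it
   associative: both sides of (x y) s = x (y s) are additive in each
   argument, so it suffices to compare them on basis elements, where it is
   exactly the cocycle identity.  In the resulting associative setting the
   theorem holds term by term: l (c h d) r^* = c (l h r) d^* because l
   commutes with c and d r^* = r d^*, and summing these with the
   coefficients z_ij turns the right-hand sides into c (a h b) d^*. *)

From HB Require Import structures.
From mathcomp Require Import all_boot all_order all_algebra.
From mathcomp Require Import monoid.
From mathcomp Require Import finmap.
From mathcomp.multinomials Require Import monalg.
From mathcomp Require Import ring.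

Set Implicit Arguments.
Unset Strict Implicit.
Unset Printing Implicit Defensive.

Import GRing.Theory.
Local Open Scope ring_scope.

Lemma malg_additive_ext (K : zmodType) (G : choiceType) (V : zmodType)
    (f g : {additive {malg K[G]} -> V}) :
  (forall c k, f << c *g k >> = g << c *g k >>) -> f =1 g.
Proof.
by move=> eq_fg x; rewrite [x]monalgE !raddf_sum; apply: eq_bigr => k _.
Qed.

Definition twisted_mulr (K : comNzRingType) (G : groupType)
    (alpha : G -> G -> K) (y x : {malg K[G]}) := x *[alpha] y.

Section TwistedMul.
Variables (K : comNzRingType) (G : groupType) (alpha : G -> G -> K).
Local Notation tm := (twisted_mul alpha).

Lemma twisted_mulEw (d1 d2 : {fset G}) (x y : {malg K[G]}) :
  (msupp x `<=` d1)%fset -> (msupp y `<=` d2)%fset ->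
  tm x y = \sum_(g <- d1) \sum_(h <- d2)
     << (x@_g * y@_h * alpha g h) *g (g * h)%g >>.
Proof.
move=> le_d1 le_d2; rewrite /twisted_mul (big_fset_incl _ le_d1) /=.
  apply: eq_bigr=> k1 _; apply: big_fset_incl => // k _ /mcoeff_outdom ->.
  by rewrite mulr0 mul0r monalgU0.
move=> k _ /mcoeff_outdom g1k.
by rewrite big1 => // k' _; rewrite g1k !mul0r monalgU0.
Qed.

Lemma twisted_mul0r x : tm 0 x = 0.
Proof. by rewrite /twisted_mul msupp0 big_seq_fset0. Qed.

Lemma twisted_mulr0 x : tm x 0 = 0.
Proof. by rewrite /twisted_mul; apply: big1 => g _; rewrite msupp0 big_seq_fset0. Qed.

Lemma twisted_mulDl x y s : tm (x + y) s = tm x s + tm y s.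
Proof.
rewrite !(@twisted_mulEw (msupp x `|` msupp y)%fset (msupp s))
  ?fsubsetUl ?fsubsetUr ?msuppD_le //.
rewrite -big_split; apply: eq_bigr=> k1 _; rewrite -big_split; apply: eq_bigr=> k2 _.
by rewrite mcoeffD !mulrDl monalgUD.
Qed.

Lemma twisted_mulDr s x y : tm s (x + y) = tm s x + tm s y.
Proof.
rewrite !(@twisted_mulEw (msupp s) (msupp x `|` msupp y)%fset)
  ?fsubsetUl ?fsubsetUr ?msuppD_le //.
rewrite -big_split; apply: eq_bigr=> k1 _; rewrite -big_split; apply: eq_bigr=> k2 _.
by rewrite mcoeffD mulrDr mulrDl monalgUD.
Qed.

HB.instance Definition _ x :=
  GRing.isNmodMorphism.Build _ _ (tm x) (twisted_mulr0 x, twisted_mulDr x).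
HB.instance Definition _ y :=
  GRing.isNmodMorphism.Build _ _ (twisted_mulr alpha y)
    (twisted_mul0r y, fun x1 x2 => twisted_mulDl x1 x2 y).

Lemma twisted_mul_suml s I (r : seq I) (F : I -> {malg K[G]}) :
  tm (\sum_(i <- r) F i) s = \sum_(i <- r) tm (F i) s.
Proof. exact: (raddf_sum (twisted_mulr alpha s)). Qed.

Lemma twisted_mul_sumr s I (r : seq I) (F : I -> {malg K[G]}) :
  tm s (\sum_(i <- r) F i) = \sum_(i <- r) tm s (F i).
Proof. exact: raddf_sum. Qed.

Lemma twisted_mulrzl x s n : tm (x *~ n) s = tm x s *~ n.
Proof. exact: (raddfMz (twisted_mulr alpha s)). Qed.

Lemma twisted_mulrzr s x n : tm s (x *~ n) = tm s x *~ n.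
Proof. exact: raddfMz. Qed.

Lemma twisted_mulUU c1 c2 k1 k2 :
  tm << c1 *g k1 >> << c2 *g k2 >> = << c1 * c2 * alpha k1 k2 *g (k1 * k2)%g >>.
Proof.
by rewrite (twisted_mulEw msuppU_le msuppU_le) !big_seq_fset1 !mcoeffUU.
Qed.

Hypothesis alpha_cocycle : forall g h k,
  alpha g h * alpha (g * h)%g k = alpha g (h * k)%g * alpha h k.

Lemma twisted_mulA x y s : tm x (tm y s) = tm (tm x y) s.
Proof.
move: s; apply: (@malg_additive_ext _ _ _ (tm x \o tm y) (tm (tm x y))) => c3 k3 /=.
move: y; apply: (@malg_additive_ext _ _ _
  (tm x \o twisted_mulr alpha << c3 *g k3 >>)
  (twisted_mulr alpha << c3 *g k3 >> \o tm x)) => c2 k2 /=.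
move: x; apply: (@malg_additive_ext _ _ _
  (twisted_mulr alpha (tm << c2 *g k2 >> << c3 *g k3 >>))
  (twisted_mulr alpha << c3 *g k3 >> \o twisted_mulr alpha << c2 *g k2 >>))
  => c1 k1 /=.
rewrite /twisted_mulr !twisted_mulUU mulgA; congr << _ *g _ >>.
transitivity (c1 * c2 * c3 * (alpha k1 (k2 * k3)%g * alpha k2 k3)); first by ring.
by rewrite -alpha_cocycle; ring.
Qed.

Lemma twisted_mul_exchange l c h d r d' r' :
  tm l c = tm c l -> tm d r' = tm r d' ->
  tm (tm l (tm (tm c h) d)) r' = tm (tm c (tm (tm l h) r)) d'.
Proof.
by move=> clC drC; rewrite !twisted_mulA clC -[LHS]twisted_mulA drC twisted_mulA.
Qed.

End TwistedMul.

Theorem mainTheorem4 (K : finComNzRingType) (G : groupType)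
    (alpha : G -> G -> K) (Halpha : is_2cocycle alpha)
    (T1 T2 : {pred {malg K[G]}})
    (HT1 : {in T1 &, forall x y, x *[alpha] y = y *[alpha] x})
    (star : {malg K[G]} -> {malg K[G]})
    (HT2 : {in T2 &, forall x y, x *[alpha] star y = y *[alpha] star x})
    (n1 n2 : nat) (L1 : 'I_n1 -> {malg K[G]}) (L2 : 'I_n2 -> {malg K[G]})
    (HL1 : forall i, L1 i \in T1) (HL2 : forall j, L2 j \in T2)
    (h a c b d : {malg K[G]})
    (Ha : a \in T1) (Hc : c \in T1) (Hb : b \in T2) (Hd : d \in T2)
    (z : 'I_n1 -> 'I_n2 -> int)
    (Hz : a *[alpha] h *[alpha] b =
          \sum_(i < n1) \sum_(j < n2) (L1 i *[alpha] h *[alpha] L2 j) *~ z i j) :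
  \sum_(i < n1) \sum_(j < n2)
      (L1 i *[alpha] (c *[alpha] h *[alpha] d) *[alpha] star (L2 j)) *~ z i j
  = c *[alpha] a *[alpha] h *[alpha] b *[alpha] star d.
Proof.
have [_ _ _ cocycle] := Halpha.
have -> : c *[alpha] a *[alpha] h *[alpha] b *[alpha] star d =
          c *[alpha] (a *[alpha] h *[alpha] b) *[alpha] star d.
  by rewrite !(twisted_mulA cocycle).
rewrite Hz (twisted_mul_sumr _ c) (twisted_mul_suml _ (star d)).
apply: eq_bigr => i _.
rewrite (twisted_mul_sumr _ c) (twisted_mul_suml _ (star d)).
apply: eq_bigr => j _.
by rewrite twisted_mulrzr twisted_mulrzl
  (twisted_mul_exchange cocycle _ (HT1 _ _ (HL1 i) Hc) (HT2 _ _ Hd (HL2 j))).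
Qed.
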